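(* Let $(\hat\tau_n)_{n\in\mathbb N}$ be $\mathbb G$-stopping times with $\lim_{n\to\infty}\hat\tau_n=\infty$, and let $(\tau_n)_{n\ge1}$ be $\mathbb F$-stopping times with $\hat\tau_n\wedge\vartheta=\tau_n\wedge\vartheta$ for all $n$. Then $\tau:=\lim_{n\to\infty}\tau_n$ satisfies $\tau\ge\nu:=\inf\{t\in\mathbb R_+:G_t=0\}$.
   Context: Let $(\Omega,\mathcal G,\mathbb P)$ be a probability space with a filtration $\mathbb F$ satisfying the usual conditions, $\vartheta$ a strictly positive finite random time, $\mathbb G$ the progressive enlargement of $\mathbb F$ by $\vartheta$ (smallest right-continuous filtration containing $\mathbb F$ making $\vartheta$ a stopping time), and $G_t=\mathbb P(\vartheta>t|\mathcal F_t)$ (càdlàg version). *)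

From HB Require Import structures.
From mathcomp Require Import all_boot all_order all_algebra.
From mathcomp Require Import all_classical all_reals all_analysis.
Set Implicit Arguments. Unset Strict Implicit. Unset Printing Implicit Defensive.
Import Order.TTheory GRing.Theory Num.Theory.
Import numFieldNormedType.Exports.
Local Open Scope classical_set_scope.
Local Open Scope ring_scope.

Section Defs.
Context {R : realType} {d : measure_display} {T : measurableType d}.
Variable P : probability T R.

(* A filtration indexed by R_+ = [0, +oo) (values at t < 0 are irrelevant):
   an increasing family of sub-sigma-algebras of the ambient sigma-algebra. *)
Definition filtration (F : R -> set_system T) : Prop :=
  [/\ (forall t, 0 <= t -> sigma_algebra setT (F t)),
      (forall t, 0 <= t -> F t `<=` measurable) &
      (forall s t, 0 <= s -> s <= t -> F s `<=` F t)].

Definition right_continuous_filtration (F : R -> set_system T) : Prop :=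
  filtration F /\
  (forall t, 0 <= t -> forall A, (forall s, t < s -> F s A) -> F t A).

Definition usual_conditions (F : R -> set_system T) : Prop :=
  right_continuous_filtration F /\
  (forall N, measurable N -> P N = 0%E -> F 0 N).

Definition stopping_time (F : R -> set_system T) (tau : T -> \bar R) : Prop :=
  (forall w, (0 <= tau w)%E) /\
  (forall t, 0 <= t -> F t [set w | (tau w <= t%:E)%E]).

(* progressive enlargement of F by theta: the smallest right-continuous
   filtration containing F and making theta a stopping time *)
Definition prog_enlargement (F : R -> set_system T) (theta : T -> R) :
    R -> set_system T :=
  fun t A => forall H : R -> set_system T,
    right_continuous_filtration H ->
    (forall s, 0 <= s -> F s `<=` H s) ->
    stopping_time H (fun w => (theta w)%:E) ->
    H t A.

Definition cond_prob_version (Ft : set_system T) (B : set T) (Y : T -> R) : Prop :=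
  (forall U, measurable U -> Ft (Y @^-1` U)) /\
  P.-integrable setT (EFin \o Y) /\
  (forall A, Ft A -> (\int[P]_(w in A) (Y w)%:E)%E = P (A `&` B)).

Definition cadlag (X : R -> T -> R) : Prop :=
  forall w, (forall t, 0 <= t -> X s w @[s --> t^'+] --> X t w) /\
            (forall t, 0 < t -> cvg (X s w @[s --> t^'-])).

Definition azema_supermartingale (F : R -> set_system T) (theta : T -> R)
    (G : R -> T -> R) : Prop :=
  cadlag G /\
  forall t, 0 <= t -> cond_prob_version (F t) [set w | t < theta w] (G t).

(* nu = inf {t in R_+ : G_t = 0}, with inf emptyset = +oo *)
Definition first_zero (G : R -> T -> R) (w : T) : \bar R :=
  ereal_inf [set t%:E | t in [set t : R | 0 <= t /\ G t w = 0]].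

End Defs.

(* Since tauh_n -> oo, eventually tauh_n > theta, and then the identity
   min(tauh_n, theta) = min(taun_n, theta) forces taun_n >= theta. So for
   t >= 0 the F_t-event B = {taun_n <= t for all n >= m} lies in
   {theta <= t}, and integrating G_t = P(theta > t | F_t) over the F_t-subsets
   of B where G_t is positive (resp. negative) shows G_t = 0 a.s. on B.
   Collecting the countably many t = k/(j+1) and m, almost surely G_t(w) = 0
   for every such t > tau(w); right-continuity of G then gives
   G_tau(w)(w) = 0 whenever tau(w) is finite, i.e. nu(w) <= tau(w). *)

From HB Require Import structures.
From mathcomp Require Import all_boot all_order all_algebra.
From mathcomp Require Import all_classical all_reals all_analysis.
From mathcomp Require Import measurable_realfun lra.
Set Implicit Arguments.
Unset Strict Implicit.
Unset Printing Implicit Defensive.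
Import Order.TTheory GRing.Theory Num.Theory.
Import numFieldNormedType.Exports.
Local Open Scope classical_set_scope.
Local Open Scope ring_scope.

Lemma sigma_algebra_setI T (G : set (set T)) :
  sigma_algebra setT G -> setI_closed G.
Proof. by move=> /(sigma_algebraP (fun X _ => subsetT X))[]. Qed.

Lemma sigma_algebra_forall_ge T (G : set (set T)) (A : (set T)^nat) m :
  sigma_algebra setT G -> (forall n, G (A n)) ->
  G [set w | forall n, (m <= n)%N -> A n w].
Proof.
move=> [_ GD GU] GA.
have -> : [set w | forall n, (m <= n)%N -> A n w] = \bigcap_n A (n + m)%N.
  apply/seteqP; split => w /= Aw n; first by move=> _; apply: Aw; rewrite leq_addl.
  by move=> mn; have := Aw (n - m)%N I; rewrite subnK.
rewrite -[X in G X]setCK setC_bigcap -setTD; apply/GD/GU => n.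
by rewrite -setTD; exact: GD.
Qed.

Lemma eventually_ge_of_min_eq (R : realType) (a b : nat -> \bar R) (x : R) :
  a n @[n --> \oo] --> +oo%E ->
  (forall n, Order.min (a n) x%:E = Order.min (b n) x%:E) ->
  \forall n \near \oo, (x%:E <= b n)%E.
Proof.
move=> /cvgeyPgt/(_ x) ax ab; apply: filterS ax => n /ltW/min_idPr xa.
by apply/min_idPr; rewrite -ab.
Qed.

Lemma ge0_integral0_ae_eq0 d (T : measurableType d) (R : realType)
    (mu : {measure set T -> \bar R}) (A : set T) (Y : T -> R) :
  measurable A -> measurable_fun A (EFin \o Y : T -> \bar R) ->
  (forall w, A w -> 0 <= Y w) -> (\int[mu]_(w in A) (Y w)%:E = 0)%E ->
  {ae mu, forall w, A w -> Y w = 0}.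
Proof.
move=> mA mY Y0 intY; have : ae_eq mu A (EFin \o Y) (cst 0%E).
  apply/ae_eq_integral_abs => //; rewrite -[RHS]intY.
  by apply: eq_integral => w /[!inE] Aw /=; rewrite ger0_norm ?Y0.
by apply: filterS => w /[swap] Aw /(_ Aw) [].
Qed.

Lemma exists_nat_ratio_in_itv (R : realType) (r e : R) : 0 <= r -> 0 < e ->
  exists j k : nat, r < k%:R / j.+1%:R < r + e.
Proof.
move=> r0 e0; set j := Num.trunc e^-1; set k := (Num.trunc (r * j.+1%:R)).+1.
exists j, k; set J := j.+1%:R : R.
have J0 : 0 < J by rewrite ltr0n.
have eJ : 1 < e * J.
  have : e * e^-1 < e * J by rewrite ltr_pM2l // truncnS_gt.
  by rewrite mulfV ?gt_eqF.
have rk : r * J < k%:R by rewrite truncnS_gt.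
have kr : k%:R <= r * J + 1.
  by rewrite /k -natr1 lerD2r truncn_le mulr_ge0 // ltW.
by rewrite ltr_pdivlMr // ltr_pdivrMr // rk /=; nra.
Qed.

Lemma right_cvg_eq0 (R : realType) (g : R -> R) (r : R) :
  g s @[s --> r^'+] --> g r ->
  (forall e, 0 < e -> exists2 s, r < s < r + e & g s = 0) -> g r = 0.
Proof.
move=> gr zeros; apply/eqP/negPn/negP => gr0.
have /nbhs_ballP[e e0 near_gr] : \forall s \near r^'+, g s != 0.
  exact: cvgr_neq0 gr0.
have [s /andP[rs se] gs0] := zeros e e0.
suff /near_gr/(_ rs) : ball r e s by rewrite gs0 eqxx.
by rewrite /ball /= ltr0_norm ?subr_lt0 // opprB ltrBlDl.
Qed.

Section cond_prob_version.
Context {R : realType} {d : measure_display} {T : measurableType d}.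
Variables (P : probability T R) (Ft : set_system T) (C : set T) (Y : T -> R).
Hypotheses (Ft_sigma : sigma_algebra setT Ft) (Ft_meas : Ft `<=` measurable).
Hypothesis Y_cond : cond_prob_version P Ft C Y.

Lemma cond_prob_version_measurable : measurable_fun setT Y.
Proof. by move=> _ U mU; rewrite setTI; apply: Ft_meas; exact: Y_cond.1. Qed.

Lemma cond_prob_version_ae_eq0 B :
  Ft B -> B `&` C = set0 -> {ae P, forall w, B w -> Y w = 0}.
Proof.
move=> FB BC; have [Y_meas [_ Y_int]] := Y_cond.
have int0 A : Ft A -> A `<=` B -> (\int[P]_(w in A) (Y w)%:E = 0)%E.
  move=> FA AB; rewrite Y_int // -(measure0 P); congr (P _).
  by apply/seteqP; split => // w [/AB Bw Cw]; rewrite -BC.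
have mY := cond_prob_version_measurable.
pose Bpos := B `&` Y @^-1` `]0, +oo[; pose Bneg := B `&` Y @^-1` `]-oo, 0[.
have FBpos : Ft Bpos by apply: sigma_algebra_setI => //; exact: Y_meas.
have FBneg : Ft Bneg by apply: sigma_algebra_setI => //; exact: Y_meas.
have pos0 : {ae P, forall w, Bpos w -> Y w = 0}.
  apply: ge0_integral0_ae_eq0; [exact: Ft_meas| | |by apply: int0 => // w []].
  - by apply/measurable_EFinP; exact: measurable_funS mY.
  - by move=> w [_ /=]; rewrite in_itv /= andbT => /ltW.
have neg0 : {ae P, forall w, Bneg w -> - Y w = 0}.
  have NY_ge0 w : Bneg w -> 0 <= - Y w.
    by move=> [_ /=]; rewrite in_itv /= oppr_ge0 => /ltW.
  apply: ge0_integral0_ae_eq0; [exact: Ft_meas| |exact: NY_ge0|].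
    by apply/measurable_EFinP/measurableT_comp => //; exact: measurable_funS mY.
  have := integral_ge0N P (D := Bneg) (f := fun w => (- Y w)%:E) NY_ge0.
  rewrite (eq_integral (fun w => (Y w)%:E)) => [|w _]; last by rewrite EFinN oppeK.
  rewrite int0 // => [/esym/eqP|w []//].
  by rewrite oppe_eq0 => /eqP.
apply: filterS2 pos0 neg0 => w wpos wneg Bw.
have [Yw|Yw|//] := ltrgtP (Y w) 0.
- by apply/eqP; rewrite -oppr_eq0; apply/eqP/wneg; split => //=; rewrite in_itv.
- by apply/wpos; split => //=; rewrite in_itv /= andbT.
Qed.

End cond_prob_version.

Lemma azema_ae_eq0_tail_le (R : realType) (d : measure_display)
    (T : measurableType d) (P : probability T R) (F : R -> set_system T)
    (theta : T -> R) (G : R -> T -> R) (sigma : nat -> T -> \bar R)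
    (t : R) (m : nat) :
  0 <= t -> filtration F -> azema_supermartingale P F theta G ->
  (forall n, stopping_time F (sigma n)) ->
  (forall w, \forall n \near \oo, ((theta w)%:E <= sigma n w)%E) ->
  {ae P, forall w, (forall n, (m <= n)%N -> (sigma n w <= t%:E)%E) -> G t w = 0}.
Proof.
move=> t0 [F_sigma F_meas _] [_ G_cond] sigma_st theta_le.
pose B := [set w | forall n, (m <= n)%N -> (sigma n w <= t%:E)%E].
suff : {ae P, forall w, B w -> G t w = 0} by [].
apply: (cond_prob_version_ae_eq0 (F_sigma t t0) (F_meas t t0) (G_cond t t0)).
  by apply: sigma_algebra_forall_ge (F_sigma t t0) _ => n; exact: (sigma_st n).2.
apply/seteqP; split => // w [sigma_le /= t_theta].
have [N _ theta_sigma] := theta_le w.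
have := le_trans (theta_sigma _ (leq_maxr m N)) (sigma_le _ (leq_maxl m N)).
by rewrite lee_fin leNgt t_theta.
Qed.

Theorem lemma2p6 (R : realType) (d : measure_display) (T : measurableType d)
  (P : probability T R) (F : R -> set_system T) (theta : T -> R)
  (G : R -> T -> R)
  (tauh : nat -> T -> \bar R) (taun : nat -> T -> \bar R) (tau : T -> \bar R) :
  usual_conditions P F ->
  measurable_fun setT theta ->
  (forall w, 0 < theta w) ->
  azema_supermartingale P F theta G ->
  (forall n, stopping_time (prog_enlargement F theta) (tauh n)) ->
  (forall w, tauh n w @[n --> \oo] --> +oo%E) ->
  (forall n, stopping_time F (taun n)) ->
  (forall n w, Order.min (tauh n w) (theta w)%:E = Order.min (taun n w) (theta w)%:E) ->
  (forall w, taun n w @[n --> \oo] --> tau w) ->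
  {ae P, forall w, (first_zero G w <= tau w)%E}.
Proof.
move=> [[F_filt _] _] _ _ G_azema _ tauh_oo taun_st min_eq taun_tau.
have theta_le w : \forall n \near \oo, ((theta w)%:E <= taun n w)%E.
  exact: eventually_ge_of_min_eq (tauh_oo w) (min_eq^~ w).
have G_zero : {ae P, forall w j k m,
    (forall n, (m <= n)%N -> (taun n w <= (k%:R / j.+1%:R)%:E)%E) ->
    G (k%:R / j.+1%:R) w = 0}.
  apply: ae_foralln => j; apply: ae_foralln => k; apply: ae_foralln => m.
  by apply: azema_ae_eq0_tail_le F_filt G_azema taun_st theta_le; rewrite divr_ge0.
apply: filterS G_zero => w G_zero_w.
have : (0 <= tau w)%E.
  by apply: cvge_to_ge (taun_tau w) _; apply: nearW => n; exact: (taun_st n).1.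
case E: (tau w) => [r| |] //; last by move=> _; exact: leey.
rewrite lee_fin => r0; apply: ge_ereal_inf; exists r%:E => //; exists r => //.
split => //; apply: right_cvg_eq0 ((G_azema.1 w).1 r r0) _ => e e0.
have [j [k /andP[rt te]]] := exists_nat_ratio_in_itv r0 e0.
exists (k%:R / j.+1%:R); first by rewrite rt.
have tau_lt : (tau w < (k%:R / j.+1%:R)%:E)%E by rewrite E lte_fin.
have [m _ taun_lt] := taun_tau w _ (open_ereal_lt' tau_lt).
by apply: (G_zero_w j k m) => n mn; exact/ltW/taun_lt.
Qed.
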